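(* Let $n\ge 2$ and let $\mathcal{P}_n$ be the set of partitions of $\{1,\dots,n\}$. The Correlation Distance $\mathrm{CD}:\mathcal{P}_n\times\mathcal{P}_n\to[0,1]$ is a metric on $\mathcal{P}_n$: for all $A,B,C\in\mathcal{P}_n$, $\mathrm{CD}(A,B)=\mathrm{CD}(B,A)$, $\mathrm{CD}(A,B)\ge 0$ with equality if and only if $A=B$, and $\mathrm{CD}(A,C)\le \mathrm{CD}(A,B)+\mathrm{CD}(B,C)$.
   Context: A clustering of $\{1,\dots,n\}$ is a partition $A=\{A_1,\dots,A_{k_A}\}$ into $k_A$ nonempty disjoint clusters. Let $N=\binom n2$. For a clustering $A$, let $\vec A\in\{0,1\}^N$ be the vector indexed by unordered pairs $\{v,w\}$ of distinct elements, whose entry is $1$ iff $v,w$ lie in the same cluster of $A$ (an intra-cluster pair), and let $m_A$ be the number of intra-cluster pairs. Let $\mathbf 1$ be the all-ones vector in $\mathbb R^N$. Define the unit vector $\vec u(A)=\frac{1}{\sqrt N}\mathbf 1$ if $k_A=1$; $\vec u(A)=\frac{\vec A-\frac{m_A}{N}\mathbf 1}{\|\vec A-\frac{m_A}{N}\mathbf 1\|}$ if $1<k_A<n$; $\vec u(A)=-\frac{1}{\sqrt N}\mathbf 1$ if $k_A=n$. The correlation coefficient is $\mathrm{CC}(A,B)=\langle \vec u(A),\vec u(B)\rangle$ (for $1<k_A,k_B<n$ this equals the Pearson correlation $\frac{N_{11}N_{00}-N_{10}N_{01}}{\sqrt{(N_{11}+N_{10})(N_{11}+N_{01})(N_{00}+N_{10})(N_{00}+N_{01})}}$,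 where $N_{11},N_{10},N_{01},N_{00}$ count pairs that are intra in both / intra in $A$ only / intra in $B$ only / intra in neither). The Correlation Distance is $\mathrm{CD}(A,B)=\frac1\pi\arccos\mathrm{CC}(A,B)$. *)

From Stdlib Require Import Reals.
From mathcomp Require Import all_boot.
Set Implicit Arguments.
Unset Strict Implicit.
Unset Printing Implicit Defensive.
Local Open Scope R_scope.

(* Ground set {1,...,n} is represented by 'I_n = {0,...,n-1}.
   A clustering is P : {set {set 'I_n}} with [partition P [set: 'I_n]]. *)

(* Unordered pairs {v,w}, v <> w, are indexed by ordered pairs (v,w) with v < w. *)
Definition pairs (n : nat) : {set 'I_n * 'I_n} := [set p : 'I_n * 'I_n | (val p.1 < val p.2)%N].

(* Vectors in R^N, N = C(n,2): functions on pairs (only values on [pairs n] matter). *)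
Definition pvec (n : nat) := 'I_n * 'I_n -> R.

Definition inner (n : nat) (x y : pvec n) : R :=
  \big[Rplus/R0]_(p in pairs n) (Rmult (x p) (y p)).

Definition vnorm (n : nat) (x : pvec n) : R := sqrt (inner x x).

Definition NN (n : nat) : R := INR 'C(n, 2).

Definition intra (n : nat) (A : {set {set 'I_n}}) (p : 'I_n * 'I_n) : bool :=
  [exists B in A, (p.1 \in B) && (p.2 \in B)].

Definition vecA (n : nat) (A : {set {set 'I_n}}) : pvec n :=
  fun p => if intra A p then 1 else 0.

Definition mA (n : nat) (A : {set {set 'I_n}}) : R :=
  INR #|[set p in pairs n | intra A p]|.

Definition centered (n : nat) (A : {set {set 'I_n}}) : pvec n :=
  fun p => (vecA A p - mA A / NN n).

Definition uvec (n : nat) (A : {set {set 'I_n}}) : pvec n :=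
  if #|A| == 1%N then (fun _ => / sqrt (NN n))
  else if #|A| == n then (fun _ => - / sqrt (NN n))
  else (fun p => centered A p / vnorm (centered A)).

Definition CC (n : nat) (A B : {set {set 'I_n}}) : R := inner (uvec A) (uvec B).

Definition CD (n : nat) (A B : {set {set 'I_n}}) : R := (acos (CC A B) / PI).

From Stdlib Require Import Reals Lra Psatz.
From mathcomp Require Import all_boot.
From HB Require Import structures.
Set Implicit Arguments.
Unset Strict Implicit.
Unset Printing Implicit Defensive.

(** CD(A, B) is the angle between the unit vectors u(A) and u(B), divided by
    pi.  The angle between unit vectors satisfies the triangle inequality:
    taking cosines, it reduces to the Gram inequality
    <u,w> >= <u,v><v,w> - sqrt(1 - <u,v>^2) sqrt(1 - <v,w>^2), which is
    Cauchy-Schwarz for the components of u and w orthogonal to v.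
    Definiteness holds because A |-> u(A) is injective on partitions: the sign
    of u(A) on a pair records whether the pair is intra-cluster (for
    1 < k_A < n the centering constant m_A / N lies strictly between 0 and 1),
    and a partition is determined by its intra-cluster relation. *)

Lemma intra_sym n (P : {set {set 'I_n}}) x y : intra P (x, y) = intra P (y, x).
Proof. by apply/existsP/existsP => -[B /and3P[PB xB yB]]; exists B; rewrite PB xB yB. Qed.

Lemma intra_pairs n (x y : 'I_n) : x != y ->
  exists2 p, p \in pairs n & forall P : {set {set 'I_n}}, intra P p = intra P (x, y).
Proof.
case: (ltngtP (val x) (val y)) => [xy | yx | /val_inj -> /eqP //] _.
- by exists (x, y); rewrite ?inE.
- by exists (y, x); rewrite ?inE // => P; rewrite intra_sym.
Qed.

Section Partition.
Variables (n : nat) (P : {set {set 'I_n}}).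
Hypothesis partP : partition P [set: 'I_n].

Let coverP : cover P = [set: 'I_n]. Proof. exact: cover_partition partP. Qed.
Let tiP : trivIset P. Proof. exact: partition_trivIset partP. Qed.

Lemma intra_pblock x y : intra P (x, y) = (y \in pblock P x).
Proof.
have Px : x \in cover P by rewrite coverP inE.
apply/existsP/idP => [[B /and3P[PB xB yB]] | yPx].
  by rewrite (def_pblock tiP PB xB).
by exists (pblock P x); rewrite pblock_mem //= yPx mem_pblock Px.
Qed.

Lemma intra_refl x : intra P (x, x).
Proof. by rewrite intra_pblock mem_pblock coverP inE. Qed.

Lemma imset_pblock : pblock P @: [set: 'I_n] = P.
Proof.
apply/setP => B; apply/imsetP/idP => [[x _ ->] | PB].
  by apply: pblock_mem; rewrite coverP inE.
have /set0Pn [x xB] : B != set0 by apply: partition_neq0 partP PB.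
by exists x; rewrite ?inE // (def_pblock tiP PB xB).
Qed.

Lemma card_partition_discrete :
  (#|P| == n) = [forall x, forall y, intra P (x, y) ==> (x == y)].
Proof.
have injP := @imset_injP _ _ (pblock P) [set: 'I_n].
rewrite imset_pblock cardsT card_ord in injP.
apply/injP/forallP => [inj x | H x y _ _ /eqP]; first apply/forallP => y.
  apply/implyP; rewrite intra_pblock -eq_pblock ?coverP ?inE // => /eqP e.
  by apply/eqP; apply: inj e; rewrite inE.
by rewrite eq_pblock ?coverP ?inE // -intra_pblock => /(implyP (forallP (H x) y))/eqP.
Qed.

Lemma card_partition_trivial : (0 < n)%N ->
  (#|P| == 1%N) = [forall x, forall y, intra P (x, y)].
Proof.
move=> n_gt0; pose x0 := Ordinal n_gt0.
apply/idP/forallP => [/cards1P [B defP] x | allP].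
  have BT : B = [set: 'I_n] by rewrite -(cover1 B) -defP.
  by apply/forallP => y; apply/existsP; exists B; rewrite defP BT !inE eqxx.
apply/cards1P; exists (pblock P x0); rewrite -{1}imset_pblock.
apply/setP => B; apply/imsetP/set1P => [[x _ ->] | ->]; last by exists x0; rewrite ?inE.
by apply: same_pblock tiP _; rewrite -intra_pblock (forallP (allP x0)).
Qed.
End Partition.

Lemma partition_intra_inj n (A B : {set {set 'I_n}}) :
  partition A [set: 'I_n] -> partition B [set: 'I_n] ->
  {in pairs n, intra A =1 intra B} -> A = B.
Proof.
move=> partA partB eqAB.
have {}eqAB x y : intra A (x, y) = intra B (x, y).
  have [-> | /intra_pairs [p pn eqp]] := eqVneq x y; first by rewrite !intra_refl.
  by rewrite -!eqp eqAB.
rewrite -(equivalence_partition_pblock partA) -(equivalence_partition_pblock partB).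
by apply: eq_imset => x; apply/setP => y; rewrite !inE -!intra_pblock // eqAB.
Qed.

Lemma card_pairs n : #|pairs n| = 'C(n, 2).
Proof.
rewrite -bin2_sum -sum1_card big_mkord.
rewrite (eq_bigl (fun p : 'I_n * 'I_n => xpredT p.1 && (p.1 < p.2)%N)); last first.
  by move=> p; rewrite inE.
rewrite -(pair_big_dep xpredT (fun i j : 'I_n => (i < j)%N) (fun _ _ => 1%N)) /=.
rewrite (exchange_big_dep xpredT) //=; apply: eq_bigr => j _.
rewrite -(big_ord_widen_cond _ xpredT (fun _ => 1%N) (ltnW (ltn_ord j))).
by rewrite sum1_card card_ord.
Qed.

Local Open Scope R_scope.

Lemma RplusA : associative Rplus. Proof. by move=> *; rewrite Rplus_assoc. Qed.
HB.instance Definition _ := Monoid.isComLaw.Build R R0 Rplus RplusA Rplus_comm Rplus_0_l.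

Section RealSums.
Variable I : finType.
Implicit Types (S : {set I}) (F : I -> R).

Lemma Rmult_sumr S c F :
  c * \big[Rplus/R0]_(i in S) F i = \big[Rplus/R0]_(i in S) (c * F i).
Proof.
elim/big_rec2: _ => [|i y1 y2 _ <-]; first exact: Rmult_0_r.
exact: Rmult_plus_distr_l.
Qed.

Lemma sumR_ge0 (P : pred I) F :
  (forall i, P i -> 0 <= F i) -> 0 <= \big[Rplus/R0]_(i | P i) F i.
Proof.
move=> F_ge0; elim/big_rec: _ => [|i y Pi y_ge0]; first exact: Rle_refl.
by have := F_ge0 i Pi; lra.
Qed.

Lemma sumR_ge_term S F j : (forall i, i \in S -> 0 <= F i) -> j \in S ->
  F j <= \big[Rplus/R0]_(i in S) F i.
Proof.
move=> F_ge0 Sj; rewrite (bigD1 j) //=.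
suff : 0 <= \big[Rplus/R0]_(i in S | i != j) F i by lra.
by apply: sumR_ge0 => i /andP[Si _]; apply: F_ge0.
Qed.

Lemma sumR_const S c : \big[Rplus/R0]_(i in S) c = INR #|S| * c.
Proof.
rewrite big_const; elim: #|S| => [|k IHk]; first by rewrite /=; lra.
by rewrite S_INR /= IHk; lra.
Qed.

End RealSums.

Lemma Rabs_le_between x y : Rabs x <= y -> - y <= x <= y.
Proof. by move=> le_xy; have := Rle_abs x; have := Rle_abs (- x); rewrite Rabs_Ropp; lra. Qed.

Lemma quadratic_ge0_discr a b c : 0 <= a ->
  (forall t, 0 <= a * t * t + 2 * b * t + c) -> b * b <= a * c.
Proof.
move=> a_ge0 q_ge0; have [a_gt0 | a0] := Rle_lt_or_eq_dec 0 a a_ge0.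
  have := q_ge0 (- b / a).
  have -> : a * (- b / a) * (- b / a) + 2 * b * (- b / a) + c = c - b * b / a.
    by field; lra.
  move=> h; have : b * b / a * a <= c * a by apply: Rmult_le_compat_r; lra.
  have -> : b * b / a * a = b * b by field; lra.
  lra.
(* For a = 0 the quadratic is affine, so it can stay nonnegative only if b = 0. *)
subst a; have [-> | b_neq0] := Req_dec b 0; first by have := q_ge0 0; lra.
pose t := - (c + 1) / (2 * b).
have := q_ge0 t.
have -> : 0 * t * t + 2 * b * t + c = -1 by rewrite /t; field.
lra.
Qed.

Lemma acos_triangle x y z : -1 <= x <= 1 -> -1 <= y <= 1 -> -1 <= z <= 1 ->
  x * y - sqrt (1 - x²) * sqrt (1 - y²) <= z -> acos z <= acos x + acos y.
Proof.
move=> x11 y11 z11 lez.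
have := acos_bound x; have := acos_bound y; have := acos_bound z => bz b_y bx.
have [PI_le | sum_lt] := Rle_lt_dec PI (acos x + acos y); first lra.
apply: Rnot_lt_le => acos_lt.
have : cos (acos z) < cos (acos x + acos y) by apply: cos_decreasing_1; lra.
by rewrite cos_plus !cos_acos // !sin_acos //; lra.
Qed.

Section Inner.
Variable n : nat.
Implicit Types (u v w x y z : pvec n).

Lemma inner_sym x y : inner x y = inner y x.
Proof. by apply: eq_bigr => p _; rewrite Rmult_comm. Qed.

Lemma inner_self_ge0 x : 0 <= inner x x.
Proof. by apply: sumR_ge0 => p _; apply: Rle_0_sqr. Qed.

Lemma inner_self_eq0 x : inner x x = 0 -> {in pairs n, forall p, x p = 0}.
Proof.
move=> x0 p pn; have := sumR_ge_term (fun i _ => Rle_0_sqr (x i)) pn.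
rewrite -/(inner x x) x0 => xp_le0.
by apply: Rsqr_0_uniq; have := Rle_0_sqr (x p); move: xp_le0; rewrite /Rsqr /=; lra.
Qed.

Lemma inner_lin2 a b c d x y z w :
  inner (fun p => a * x p + b * y p) (fun p => c * z p + d * w p) =
  a * c * inner x z + a * d * inner x w + b * c * inner y z + b * d * inner y w.
Proof.
rewrite /inner !Rmult_sumr -!big_split /=; apply: eq_bigr => p _; ring.
Qed.

Lemma inner_Cauchy_Schwarz x y : Rabs (inner x y) <= vnorm x * vnorm y.
Proof.
have discr : inner x y * inner x y <= inner x x * inner y y.
  apply: quadratic_ge0_discr (inner_self_ge0 x) _ => t.
  have := inner_self_ge0 (fun p => t * x p + 1 * y p).
  by rewrite inner_lin2 (inner_sym y x); lra.
rewrite /vnorm -sqrt_mult; try exact: inner_self_ge0.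
by rewrite -sqrt_Rsqr_abs; apply: sqrt_le_1_alt.
Qed.

Lemma unit_inner_bound u v : inner u u = 1 -> inner v v = 1 -> -1 <= inner u v <= 1.
Proof.
move=> u1 v1; have := inner_Cauchy_Schwarz u v; rewrite /vnorm u1 v1 sqrt_1.
by move/Rabs_le_between; lra.
Qed.

Lemma unit_inner_eq1 u v : inner u u = 1 -> inner v v = 1 -> inner u v = 1 ->
  {in pairs n, u =1 v}.
Proof.
move=> u1 v1 uv1 p pn.
have diff0 : inner (fun q => 1 * u q + -1 * v q) (fun q => 1 * u q + -1 * v q) = 0.
  by rewrite inner_lin2 u1 v1 uv1 inner_sym uv1; ring.
by have := inner_self_eq0 diff0 pn; lra.
Qed.

Section UnitTriangle.
Variables u v w : pvec n.
Hypotheses (u1 : inner u u = 1) (v1 : inner v v = 1) (w1 : inner w w = 1).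

Lemma unit_inner_Gram :
  inner u v * inner v w - sqrt (1 - (inner u v)²) * sqrt (1 - (inner v w)²) <= inner u w.
Proof.
set a := inner u v; set b := inner v w.
pose x p := 1 * u p + - a * v p; pose y p := 1 * w p + - b * v p.
have xx : inner x x = 1 - a * a.
  by rewrite inner_lin2 u1 v1 (inner_sym v u) -/a; ring.
have yy : inner y y = 1 - b * b.
  by rewrite inner_lin2 w1 v1 (inner_sym w v) -/b; ring.
have xy : inner x y = inner u w - a * b.
  by rewrite inner_lin2 v1 -/a -/b; ring.
have := inner_Cauchy_Schwarz x y; rewrite /vnorm xx yy xy /Rsqr.
by move/Rabs_le_between; lra.
Qed.

Lemma acos_inner_triangle : acos (inner u w) <= acos (inner u v) + acos (inner v w).
Proof.
exact: (acos_triangle (unit_inner_bound u1 v1) (unit_inner_bound v1 w1)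
                      (unit_inner_bound u1 w1) unit_inner_Gram).
Qed.

End UnitTriangle.
End Inner.

Lemma NN_card n : NN n = INR #|pairs n|.
Proof. by rewrite /NN card_pairs. Qed.

Section Embedding.
Variable n : nat.
Hypothesis n_ge2 : (2 <= n)%N.
Implicit Types (A B : {set {set 'I_n}}) (p : 'I_n * 'I_n).

Lemma NN_gt0 : 0 < NN n.
Proof. by apply: lt_0_INR; apply/ltP; rewrite bin_gt0. Qed.

Lemma mA_gt0 A : partition A [set: 'I_n] -> #|A| != n -> 0 < mA A.
Proof.
move=> partA; rewrite card_partition_discrete //.
case/forallPn => x /forallPn [y]; rewrite negb_imply => /andP[xy_intra xy_neq].
have [p pn eqp] := intra_pairs xy_neq.
apply: lt_0_INR; apply/ltP; rewrite card_gt0; apply/set0Pn; exists p.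
by rewrite inE pn eqp.
Qed.

Lemma mA_lt_NN A : partition A [set: 'I_n] -> #|A| != 1%N -> mA A < NN n.
Proof.
move=> partA; rewrite card_partition_trivial //; last exact: ltnW.
case/forallPn => x /forallPn [y xy_sep].
have xy_neq : x != y by apply: contraNneq xy_sep => ->; rewrite intra_refl.
have [p pn eqp] := intra_pairs xy_neq.
rewrite NN_card; apply: lt_INR; apply/ltP; apply: proper_card; apply/properP.
split; first by apply/subsetP => q; rewrite inE => /andP[].
by exists p; rewrite // inE pn eqp.
Qed.

Section ProperClustering.
Variable A : {set {set 'I_n}}.
Hypotheses (partA : partition A [set: 'I_n]) (A1 : #|A| != 1%N) (An : #|A| != n).

Let ratio_bounds : 0 < mA A / NN n < 1.
Proof.
have := mA_gt0 partA An; have := mA_lt_NN partA A1; have := NN_gt0.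
move=> N_gt0 m_lt m_gt0; split; first exact: Rdiv_lt_0_compat.
apply: (Rmult_lt_reg_r (NN n)) => //.
by rewrite /Rdiv Rmult_assoc Rinv_l; lra.
Qed.

Lemma centered_gt0 p : 0 < centered A p <-> intra A p.
Proof. by rewrite /centered /vecA; case: intra; have := ratio_bounds; split => //; lra. Qed.

Lemma centered_neq0 p : centered A p <> 0.
Proof. by rewrite /centered /vecA; case: intra; have := ratio_bounds; lra. Qed.

Lemma inner_centered_gt0 : 0 < inner (centered A) (centered A).
Proof.
have p0n : (Ordinal (ltnW n_ge2), Ordinal n_ge2) \in pairs n by rewrite inE.
apply: Rlt_le_trans (sumR_ge_term (fun p _ => Rle_0_sqr (centered A p)) p0n).
by apply: Rlt_0_sqr; apply: centered_neq0.
Qed.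

End ProperClustering.

Lemma uvec_unit A : partition A [set: 'I_n] -> inner (uvec A) (uvec A) = 1.
Proof.
move=> partA; have N_gt0 := NN_gt0.
have sqrtN_gt0 : 0 < sqrt (NN n) by apply: sqrt_lt_R0.
have sqrtN2 : sqrt (NN n) * sqrt (NN n) = NN n by apply: sqrt_sqrt; lra.
rewrite /uvec; case: eqP => [_ | /eqP A1]; last case: eqP => [_ | /eqP An].
- by rewrite /inner sumR_const -NN_card -{1}sqrtN2; field; lra.
- by rewrite /inner sumR_const -NN_card -{1}sqrtN2; field; lra.
set c := centered A; have c_gt0 : 0 < inner c c by exact: inner_centered_gt0.
have normc2 : vnorm c * vnorm c = inner c c by apply: sqrt_sqrt; lra.
have normc_gt0 : 0 < vnorm c by apply: sqrt_lt_R0.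
rewrite /inner (eq_bigr (fun p => / (vnorm c * vnorm c) * (c p * c p))); last first.
  by move=> p _; field; lra.
by rewrite -Rmult_sumr -/(inner c c) normc2; field; lra.
Qed.

Lemma uvec_gt0 A p : partition A [set: 'I_n] -> p \in pairs n ->
  0 < uvec A p <-> intra A p.
Proof.
move=> partA pn; have sqrtN_gt0 : 0 < / sqrt (NN n).
  by apply: Rinv_0_lt_compat; apply: sqrt_lt_R0; apply: NN_gt0.
rewrite /uvec; case: eqP => [A1 | /eqP A1]; last case: eqP => [An | /eqP An].
- have all_intra : [forall x, forall y, intra A (x, y)].
    by rewrite -card_partition_trivial ?A1 // ltnW.
  by case: p pn => x y _; rewrite (forallP (forallP all_intra x) y).
- have discrete : [forall x, forall y, intra A (x, y) ==> (x == y)].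
    by rewrite -card_partition_discrete ?An.
  case: p pn => x y; rewrite inE /= => xy.
  have xy_neq : x != y by apply: contraTneq xy => ->; rewrite ltnn.
  have := implyP (forallP (forallP discrete x) y); rewrite (negbTE xy_neq).
  by case: intra => [/(_ isT) | _] //; split => //; lra.
have normc_gt0 : 0 < vnorm (centered A) by apply: sqrt_lt_R0; exact: inner_centered_gt0.
rewrite -(centered_gt0 partA A1 An); split => c_gt0.
  by have := Rmult_lt_0_compat _ _ c_gt0 normc_gt0; rewrite /Rdiv Rmult_assoc Rinv_l; lra.
exact: Rdiv_lt_0_compat.
Qed.

Lemma uvec_inj A B : partition A [set: 'I_n] -> partition B [set: 'I_n] ->
  {in pairs n, uvec A =1 uvec B} -> A = B.
Proof.
move=> partA partB eqAB; apply: partition_intra_inj => // p pn.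
apply/idP/idP.
  by move/(uvec_gt0 partA pn); rewrite eqAB // => /(uvec_gt0 partB pn).
by move/(uvec_gt0 partB pn); rewrite -eqAB // => /(uvec_gt0 partA pn).
Qed.

End Embedding.

Theorem theorem1 (n : nat) (hn : (2 <= n)%N) :
  forall A B C : {set {set 'I_n}},
    partition A [set: 'I_n] ->
    partition B [set: 'I_n] ->
    partition C [set: 'I_n] ->
    (0 <= CD A B <= 1) /\
    CD A B = CD B A /\
    (CD A B = 0 <-> A = B) /\
    CD A C <= CD A B + CD B C.
Proof.
move=> A B C partA partB partC.
have uA := uvec_unit hn partA; have uB := uvec_unit hn partB; have uC := uvec_unit hn partC.
have PI_gt0 := PI_RGT_0.
have scaled t : t = t / PI * PI by field; apply: PI_neq0.
have := acos_bound (CC A B); rewrite [acos (CC A B)]scaled -/(CD A B) => boundAB.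
split; first by nra.
split; first by rewrite /CD /CC inner_sym.
split.
  split => [CD0 | <-]; last by rewrite /CD /CC uA acos_1 /Rdiv Rmult_0_l.
  have acos0 : acos (CC A B) = 0 by rewrite [LHS]scaled -/(CD A B) CD0 Rmult_0_l.
  have CC1 : CC A B = 1.
    by have := cos_acos _ (unit_inner_bound uA uB); rewrite -/(CC A B) acos0 cos_0.
  by apply: (uvec_inj hn partA partB); apply: unit_inner_eq1 uA uB CC1.
have := acos_inner_triangle uA uB uC.
rewrite [acos (CC A C)]scaled [acos (CC A B)]scaled [acos (CC B C)]scaled.
rewrite -/(CD A C) -/(CD A B) -/(CD B C); nra.
Qed.
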